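(* Let $n$ be a positive integer and $k$ an integer with $0\le k\le n$. Then $$e_k\left(\left\{\csc^2\left(\tfrac{(2j-1)\pi}{4n+2}\right) : j=1,\dots,n\right\}\right) = \frac{(n+k)!\,4^k}{(2k)!\,(n-k)!}.$$
   Context: $e_k(\alpha_1,\dots,\alpha_n)$ denotes the degree-$k$ elementary symmetric function of $\alpha_1,\dots,\alpha_n$ (with $e_0=1$). *)

From Stdlib Require Import Reals List.
Open Scope R_scope.

Fixpoint esym (l : list R) (k : nat) : R :=
  match k with
  | O => 1
  | S k' =>
      match l with
      | nil => 0
      | x :: l' => esym l' (S k') + x * esym l' k'
      end
  end.

Definition csc (x : R) : R := / sin x.

Definition csc2_list (n : nat) : list R :=
  map (fun j : nat => (csc ((2 * INR j - 1) * PI / (4 * INR n + 2))) ^ 2)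
      (seq 1 n).

(* For t = theta n j = (2j-1)pi/(4n+2), 1 <= j <= n, we have cos((2n+1)t) = 0
   and cos t <> 0.  The identity cos((2n+1)t) = cos t * Q_n(sin^2 t), where
   Q_0 = 1, Q_1 = 1 - 4X and Q_(n+2) = (2 - 4X) Q_(n+1) - Q_n, therefore makes
   the n distinct numbers sin^2(theta n j) the roots of Q_n, a polynomial of
   degree n with Q_n(0) = 1 and coefficients C(n+k, 2k) (-4)^k.  Hence
   Q_n = prod_j (1 - csc^2(theta n j) X), and comparing the coefficients of X^k
   gives e_k = C(n+k, 2k) 4^k. *)

From Pilot Require Import Defs.
From Stdlib Require Import Reals Lra Lia.
From mathcomp Require all_boot all_order all_algebra Rstruct zify ring.
Open Scope R_scope.

Lemma nat_ind2 (P : nat -> Prop) :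
  P 0%nat -> P 1%nat -> (forall n, P n -> P (S n) -> P (S (S n))) ->
  forall n, P n.
Proof.
  intros P0 P1 PSS n.
  enough (P n /\ P (S n)) by tauto.
  induction n as [|n [IH IHS]]; auto.
Qed.

Lemma cos_plus_add_cos_minus a b : cos (a + b) + cos (a - b) = 2 * cos a * cos b.
Proof. rewrite cos_plus, cos_minus. ring. Qed.

Lemma csc2_mul_sin2 x : sin x <> 0 -> csc x ^ 2 * sin x ^ 2 = 1.
Proof. intros Hx. unfold csc. field. exact Hx. Qed.

Definition theta (n j : nat) : R := (2 * INR j - 1) * PI / (4 * INR n + 2).

Lemma theta_bounds n j : (1 <= j <= n)%nat -> 0 < theta n j < PI / 2.
Proof.
  intros [H1 H2]. apply le_INR in H1, H2. simpl in H1.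
  assert (Hpi := PI_RGT_0). unfold theta.
  split.
  - apply Rdiv_lt_0_compat; nra.
  - apply Rmult_lt_reg_r with (4 * INR n + 2); [lra|].
    field_simplify; nra.
Qed.

Lemma theta_lt n i j : (i < j)%nat -> theta n i < theta n j.
Proof.
  intros Hij. apply lt_INR in Hij.
  assert (Hpi := PI_RGT_0). assert (Hn := pos_INR n).
  unfold theta, Rdiv. apply Rmult_lt_compat_r.
  - apply Rinv_0_lt_compat. lra.
  - nra.
Qed.

Lemma cos_odd_mul_theta n j : (1 <= j)%nat ->
  cos ((2 * INR n + 1) * theta n j) = 0.
Proof.
  intros Hj. destruct j as [|j]; [lia|].
  apply cos_eq_0_1. exists (Z.of_nat j). rewrite <- INR_IZR_INZ.
  assert (Hn := pos_INR n). unfold theta. rewrite S_INR. field. lra.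
Qed.

Lemma sin_theta_pos n j : (1 <= j <= n)%nat -> 0 < sin (theta n j).
Proof. intros Hj. destruct (theta_bounds n j Hj). apply sin_gt_0; lra. Qed.

Lemma sin2_theta_lt n i j : (1 <= i)%nat -> (i < j <= n)%nat ->
  sin (theta n i) ^ 2 < sin (theta n j) ^ 2.
Proof.
  intros Hi Hj.
  destruct (theta_bounds n i ltac:(lia)), (theta_bounds n j ltac:(lia)).
  assert (sin (theta n i) < sin (theta n j)).
  { apply sin_increasing_1; try lra. apply theta_lt. lia. }
  assert (0 < sin (theta n i)) by (apply sin_gt_0; lra).
  nra.
Qed.

Lemma sin2_theta_inj n i j : (1 <= i <= n)%nat -> (1 <= j <= n)%nat ->
  sin (theta n i) ^ 2 = sin (theta n j) ^ 2 -> i = j.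
Proof.
  intros Hi Hj Hij.
  destruct (Nat.lt_trichotomy i j) as [Hlt|[Heq|Hgt]]; trivial.
  - pose proof (sin2_theta_lt n i j ltac:(lia) ltac:(lia)). lra.
  - pose proof (sin2_theta_lt n j i ltac:(lia) ltac:(lia)). lra.
Qed.

Section OddMultipleCosine.

Variable f : nat -> R -> R.
Hypothesis f_0 : forall s, f 0%nat s = 1.
Hypothesis f_1 : forall s, f 1%nat s = 1 - 4 * s.
Hypothesis f_SS : forall n s, f (S (S n)) s = (2 - 4 * s) * f (S n) s - f n s.

Lemma cos_odd_mul n t : cos ((2 * INR n + 1) * t) = cos t * f n (sin t ^ 2).
Proof.
  induction n as [| |n IH IHS] using nat_ind2.
  - rewrite f_0. replace ((2 * INR 0 + 1) * t) with t by (simpl; ring). ring.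
  - rewrite f_1. replace ((2 * INR 1 + 1) * t) with (2 * t + t) by (simpl; ring).
    rewrite cos_plus, cos_2a_sin, sin_2a. ring.
  - assert (Hsum := cos_plus_add_cos_minus ((2 * INR (S n) + 1) * t) (2 * t)).
    replace ((2 * INR (S n) + 1) * t + 2 * t) with ((2 * INR (S (S n)) + 1) * t)
      in Hsum by (rewrite !S_INR; ring).
    replace ((2 * INR (S n) + 1) * t - 2 * t) with ((2 * INR n + 1) * t)
      in Hsum by (rewrite S_INR; ring).
    rewrite IH, IHS, cos_2a_sin in Hsum.
    rewrite f_SS. lra.
Qed.

Lemma odd_cos_rec_root n j : (1 <= j <= n)%nat -> f n (sin (theta n j) ^ 2) = 0.
Proof.
  intros Hj.
  assert (Hcos : 0 < cos (theta n j)).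
  { destruct (theta_bounds n j Hj). apply cos_gt_0; lra. }
  assert (H := cos_odd_mul_theta n j ltac:(lia)).
  rewrite cos_odd_mul in H.
  destruct (Rmult_integral _ _ H); [lra|assumption].
Qed.

End OddMultipleCosine.

(* MathComp is imported only inside this module, so that the notations of the
   final statement keep their Stdlib meaning. *)
Module CscPoly.
Import all_boot all_order all_algebra Rstruct zify ring.
Import Order.TTheory GRing.Theory Num.Theory.

Lemma List_mapE (T U : Type) (f : T -> U) (s : seq T) : List.map f s = map f s.
Proof. by elim: s => //= x s ->. Qed.

Lemma List_seqE m n : List.seq m n = iota m n.
Proof. by elim: n m => //= n IHn m; rewrite IHn. Qed.

Lemma binSS_add_bin m r :
  ('C(m.+2, r.+2) + 'C(m, r.+2) = 2 * 'C(m.+1, r.+2) + 'C(m, r))%N.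
Proof. rewrite !binS; lia. Qed.

Section ElementarySymmetric.
Local Open Scope ring_scope.
Implicit Types l : seq R.

Lemma esym0 l : Defs.esym l 0 = 1.
Proof. by case: l. Qed.

Lemma esym_gt_size l k : (size l < k)%N -> Defs.esym l k = 0.
Proof.
elim: l k => [|x l IHl] [|k] //= hk.
by rewrite RplusE RmultE !IHl ?mulr0 ?addr0 //; lia.
Qed.

Lemma coef_prod_1subZX l k :
  (\prod_(c <- l) (1 - c *: 'X))`_k = (-1) ^+ k * Defs.esym l k.
Proof.
elim: l k => [|c l IHl] k.
  by rewrite big_nil coef1; case: k => [|k] /=; rewrite ?mulr1 ?mulr0.
rewrite big_cons mulrBl mul1r -scalerAl coefB coefZ coefXM IHl.
case: k => [|k] /=; first by rewrite esym0 R1E mulr0 subr0.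
by rewrite IHl RplusE RmultE exprS; ring.
Qed.

Lemma size_prod_1subZX l :
  (size (\prod_(c <- l) (1 - c *: 'X))%R <= (size l).+1)%N.
Proof.
apply/leq_sizeP => k hk.
by rewrite coef_prod_1subZX esym_gt_size ?mulr0.
Qed.

End ElementarySymmetric.

Section OddCosPoly.
Local Open Scope ring_scope.
Variable K : comNzRingType.

Fixpoint odd_cos_poly (n : nat) : {poly K} :=
  match n with
  | O => 1
  | S O => 1 - 4 *: 'X
  | S ((S m) as m') => (2 - 4 *: 'X) * odd_cos_poly m' - odd_cos_poly m
  end.

Lemma coef_odd_cos_poly n k :
  (odd_cos_poly n)`_k = 'C(n + k, 2 * k)%:R * (-4) ^+ k.
Proof.
elim/nat_ind2: n k => [| |n IHn IHSn] k.
- rewrite /= coef1 add0n; case: k => [|k]; first by rewrite expr0 mulr1.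
  by rewrite bin_small ?mul0r //; lia.
- rewrite /= coefB coef1 coefZ coefX.
  case: k => [|[|k]] /=; first by rewrite expr0 !mulr1 mulr0 subr0.
    by rewrite mulr1 sub0r (_ : 'C(1 + 1, 2 * 1) = 1%N) // mul1r.
  by rewrite bin_small ?mul0r ?mulr0 ?subr0 //; lia.
rewrite [odd_cos_poly _.+2]/= mulrBl -scalerAl [2 * _]mulr_natl.
rewrite !coefB coefMn coefZ coefXM !IHSn IHn.
case: k => [|k] /=; first by rewrite !addn0 !bin0 !expr0 !mulr1; ring.
have -> : (2 * k.+1 = (2 * k).+2)%N by lia.
rewrite !addSn !addnS.
set m := (n + k).+1; set r := (2 * k)%N.
have Hbin : 'C(m.+2, r.+2)%:R + 'C(m, r.+2)%:R
    = 2%:R * 'C(m.+1, r.+2)%:R + 'C(m, r)%:R :> K.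
  by rewrite -natrM -!natrD binSS_add_bin.
have -> : 'C(m.+2, r.+2)%:R
    = 2%:R * 'C(m.+1, r.+2)%:R + 'C(m, r)%:R - 'C(m, r.+2)%:R :> K.
  by rewrite -Hbin addrK.
by rewrite exprS; ring.
Qed.

Lemma size_odd_cos_poly n : (size (odd_cos_poly n) <= n.+1)%N.
Proof.
apply/leq_sizeP => k hk.
by rewrite coef_odd_cos_poly bin_small ?mul0r //; lia.
Qed.

Lemma odd_cos_poly_at0 n : (odd_cos_poly n).[0] = 1.
Proof. by rewrite horner_coef0 coef_odd_cos_poly addn0 bin0 expr0 mulr1. Qed.

End OddCosPoly.

Section PolyInterpolation.
Local Open Scope ring_scope.

Lemma eq_poly_at_points (D : idomainType) (p q : {poly D}) (xs : seq D) :
  uniq xs -> (size p <= size xs)%N -> (size q <= size xs)%N ->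
  {in xs, forall x, p.[x] = q.[x]} -> p = q.
Proof.
move=> uxs sp sq pq; apply/eqP; rewrite -subr_eq0; apply/eqP.
apply: (roots_geq_poly_eq0 (rs := xs)) => //.
  by apply/allP => x /pq pqx; rewrite /root hornerD hornerN pqx subrr.
by rewrite (leq_trans (size_polyD _ _)) // size_polyN geq_max sp sq.
Qed.

End PolyInterpolation.

Section CosecantPoints.
Local Open Scope ring_scope.

Lemma IZR2 : IZR 2 = 2%:R :> R.
Proof. by rewrite IZRposE INRE. Qed.

Lemma IZR4 : IZR 4 = 4%:R :> R.
Proof. by rewrite IZRposE INRE. Qed.

Lemma csc2_listE n : csc2_list n = [seq csc (theta n j) ^+ 2 | j <- iota 1 n].
Proof.
by rewrite /csc2_list List_mapE List_seqE; apply: eq_map => j; rewrite RpowE.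
Qed.

Lemma odd_cos_poly_root n j : (1 <= j <= n)%N ->
  (odd_cos_poly R n).[sin (theta n j) ^+ 2] = 0.
Proof.
move=> hj; rewrite -RpowE.
apply: (odd_cos_rec_root (fun m s => (odd_cos_poly R m).[s])); last by lia.
- by move=> s; rewrite hornerC.
- by move=> s; rewrite /= !hornerE RminusE RmultE IZR4.
- by move=> m s; rewrite [odd_cos_poly _ _.+2]/= !hornerE RminusE RmultE IZR2 IZR4.
Qed.

Lemma odd_cos_poly_factor n :
  odd_cos_poly R n = \prod_(c <- csc2_list n) (1 - c *: 'X).
Proof.
pose s j := sin (theta n j) ^+ 2.
have sin_neq0 j : (1 <= j <= n)%N -> sin (theta n j) <> 0.
  by move=> hj; apply: Rgt_not_eq; apply: sin_theta_pos; lia.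
have s_gt0 j : (1 <= j <= n)%N -> 0 < s j.
  by move=> hj; rewrite lt0r sqrf_eq0 sqr_ge0 andbT; apply/eqP/sin_neq0.
have csc2_s j : (1 <= j <= n)%N -> csc (theta n j) ^+ 2 * s j = 1.
  by move=> hj; rewrite /s -!RpowE -RmultE csc2_mul_sin2 //; apply: sin_neq0.
apply: (@eq_poly_at_points _ _ _ (0 :: [seq s j | j <- iota 1 n])).
- rewrite /= map_inj_in_uniq ?iota_uniq ?andbT.
    apply/mapP => -[j]; rewrite mem_iota => hj s0.
    by move: (s_gt0 j ltac:(lia)); rewrite -s0 ltxx.
  move=> i j; rewrite !mem_iota /s -!RpowE => hi hj.
  by apply: sin2_theta_inj; lia.
- by rewrite /= size_map size_iota size_odd_cos_poly.
- rewrite /= size_map size_iota (leq_trans (size_prod_1subZX _)) //.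
  by rewrite csc2_listE size_map size_iota.
move=> x; rewrite inE => /predU1P [-> | /mapP [j]].
  by rewrite odd_cos_poly_at0 horner_prod big1 // => c _; rewrite !hornerE subr0.
rewrite mem_iota => hj ->; rewrite odd_cos_poly_root; last by lia.
rewrite horner_prod; apply/esym/eqP; rewrite prodf_seq_eq0; apply/hasP.
exists (csc (theta n j) ^+ 2).
  by rewrite csc2_listE; apply/mapP; exists j; rewrite ?mem_iota.
by rewrite hornerD hornerN hornerZ hornerX hornerC csc2_s ?subrr ?eqxx //; lia.
Qed.

Lemma esym_csc2_list n k :
  Defs.esym (csc2_list n) k = 'C(n + k, 2 * k)%:R * 4 ^+ k.
Proof.
have := coef_odd_cos_poly R n k.
rewrite odd_cos_poly_factor coef_prod_1subZX (exprNn 4) mulrCA.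
by move/(congr1 ( *%R ((-1) ^+ k))); rewrite !signrMK.
Qed.

End CosecantPoints.

Lemma esym_csc2_list_binomial n k :
  Defs.esym (csc2_list n) k = INR 'C(n + k, 2 * k) * 4 ^ k.
Proof. by rewrite esym_csc2_list INRE RpowE RmultE IZR4. Qed.

Lemma INR_binomial m p : (p <= m)%N -> INR 'C(m, p) = Binomial.C m p.
Proof.
move=> hpm; rewrite /Binomial.C minusE !factE -(bin_fact hpm) !INRE.
rewrite RdivE RmultE -natrM natrM mulfK //.
by rewrite pnatr_eq0 -lt0n muln_gt0 !fact_gt0.
Qed.

End CscPoly.

Theorem mainTheorem11 (n k : nat) (hn : (1 <= n)%nat) (hk : (k <= n)%nat) :
  esym (csc2_list n) k =
  INR (Factorial.fact (n + k)) * 4 ^ k / (INR (Factorial.fact (2 * k)) * INR (Factorial.fact (n - k))).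
Proof.
  rewrite CscPoly.esym_csc2_list_binomial, CscPoly.INR_binomial by lia.
  rewrite <- ssrnat.plusE, <- ssrnat.multE.
  unfold Binomial.C. replace (n + k - 2 * k)%nat with (n - k)%nat by lia.
  unfold Rdiv. ring.
Qed.
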